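(* Let $a\in A^\pm_{p|q}$ be homogeneous of degree $g\in\mathbb{Z}^n$ with respect to the $\mathbb{Z}^n$-grading. If $a^\ast a=0$, then $a=0$.
   Context: $\Bbbk$ is an algebraically closed field of characteristic $0$. Fix integers $p,q\ge 0$, put $n=p+q$, and fix a sign $\pm\in\{+,-\}$. Set $p(i)=0$ for $1\le i\le p$ and $p(i)=1$ for $p<i\le n$. The Clifford/Weyl superalgebra $A^\pm_{p|q}$ is the associative unital superalgebra over $\Bbbk$ generated by $x_i,\partial_i$ ($1\le i\le n$), where $x_i,\partial_i$ have parity $p(i)$, subject to the relations $[\partial_i,x_j]_\pm=\delta_{ij}$, $[x_i,x_j]_\pm=0$, $[\partial_i,\partial_j]_\pm=0$ for all $i,j$, where for homogeneous $a,b$ one sets $[a,b]_\pm=ab\pm(-1)^{p(a)p(b)}ba$. $A^\pm_{p|q}$ is $\mathbb{Z}^n$-graded by $\deg x_i=\mathbf{e}_i$, $\deg\partial_i=-\mathbf{e}_i$. The map $\ast$ is the unique $\Bbbk$-linear map $A^\pm_{p|q}\to A^\pm_{p|q}$ with $(ab)^\ast=b^\ast a^\ast$, $(a^\ast)^\ast=a$, $x_i^\ast=\partial_i$, $\partial_i^\ast=x_i$. *)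

From HB Require Import structures.
From mathcomp Require Import all_boot all_order all_algebra.
Unset Printing Implicit Defensive.
Import Order.TTheory GRing.Theory Num.Theory.
Local Open Scope ring_scope.

(* Indices 1..n of the paper are 'I_n = {0,..,n-1}; index i (0-based) has
   parity p(i) = 0 iff i < p. *)
Definition cw_par (p : nat) {n : nat} (i : 'I_n) : bool := (p <= i)%N.

(* [a,b]_sgn = a b + s (-1)^(pa pb) b a, where s = +1 if sgn = true ("+")
   and s = -1 if sgn = false ("-"). *)
Definition sbr {k : pzRingType} {A : algType k} (sgn : bool) (pa pb : bool)
  (a b : A) : A :=
  a * b + ((if sgn then 1 else -1) * (-1) ^+ (pa && pb)) * (b * a).

Definition cw_relations {k : pzRingType} {B : algType k} (p q : nat)
  (sgn : bool) (x d : 'I_(p + q) -> B) : Prop :=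
  [/\ forall i j : 'I_(p + q),
        sbr sgn (cw_par p i) (cw_par p j) (d i) (x j) = (i == j)%:R,
      forall i j : 'I_(p + q),
        sbr sgn (cw_par p i) (cw_par p j) (x i) (x j) = 0 &
      forall i j : 'I_(p + q),
        sbr sgn (cw_par p i) (cw_par p j) (d i) (d j) = 0].

Definition is_alg_hom {k : pzRingType} {A B : algType k} (f : A -> B) : Prop :=
  [/\ forall (c : k) (u v : A), f (c *: u + v) = c *: f u + f v,
      forall u v : A, f (u * v) = f u * f v &
      f 1 = 1].

(* A (with generators x, d) is the associative unital k-algebra presented by
   the generators x_i, d_i and the relations above: universal property. *)
Definition cw_presented {k : pzRingType} (p q : nat) (sgn : bool)
  (A : algType k) (x d : 'I_(p + q) -> A) : Prop :=
  cw_relations p q sgn x d /\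
  forall (B : algType k) (x' d' : 'I_(p + q) -> B),
    cw_relations p q sgn x' d' ->
    (exists f : A -> B, [/\ is_alg_hom f, forall i, f (x i) = x' i
                                        & forall i, f (d i) = d' i]) /\
    (forall f g : A -> B,
        is_alg_hom f -> (forall i, f (x i) = x' i) -> (forall i, f (d i) = d' i) ->
        is_alg_hom g -> (forall i, g (x i) = x' i) -> (forall i, g (d i) = d' i) ->
        forall a, f a = g a).

(* Words in the generators: a letter (true, i) is x_i, (false, i) is d_i. *)
Definition cw_letter {k : pzRingType} {A : algType k} {n : nat}
  (x d : 'I_n -> A) (l : bool * 'I_n) : A := if l.1 then x l.2 else d l.2.

Definition cw_word {k : pzRingType} {A : algType k} {n : nat}
  (x d : 'I_n -> A) (w : seq (bool * 'I_n)) : A :=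
  \prod_(l <- w) cw_letter x d l.

Definition cw_wdeg {n : nat} (w : seq (bool * 'I_n)) (j : 'I_n) : int :=
  \sum_(l <- w) (if l.2 == j then (if l.1 then 1 else -1) else 0).

Definition cw_homogeneous {k : pzRingType} {A : algType k} {n : nat}
  (x d : 'I_n -> A) (g : 'I_n -> int) (a : A) : Prop :=
  exists s : seq (k * seq (bool * 'I_n)),
    a = \sum_(t <- s) t.1 *: cw_word x d t.2 /\
    (forall t, t \in s -> forall j, cw_wdeg t.2 j = g j).

Definition cw_star {k : pzRingType} {A : algType k} {n : nat}
  (x d : 'I_n -> A) (st : A -> A) : Prop :=
  [/\ forall (c : k) (u v : A), st (c *: u + v) = c *: st u + st v,
      forall u v : A, st (u * v) = st v * st u,
      forall u : A, st (st u) = u,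
      forall i, st (x i) = d i &
      forall i, st (d i) = x i].

From HB Require Import structures.
From mathcomp Require Import all_boot all_order all_algebra.
From mathcomp Require Import boolp ring.
Set Implicit Arguments.
Unset Strict Implicit.
Unset Printing Implicit Defensive.
Import Order.TTheory GRing.Theory Num.Theory.
Local Open Scope ring_scope.

(* A acts on the Fock space k^(N^n) of functions of occupation vectors: x_i
   raises and d_i lowers the i-th occupation, with a Jordan-Wigner sign, and in
   the Clifford directions occupation numbers only count modulo 2.  In the basis
   of Dirac functions every word is a monomial matrix, and the star is the
   adjoint for the diagonal weight W(m) = prod_(i Weyl) m_i!, which is nonzero in
   characteristic 0.  If a is homogeneous of degree e, then a maps delta_g to
   c delta_(g+e), so the diagonal entry of a* a at g is c^2 W(g+e) / W(g); hence
   a* a = 0 forces a to act by 0.  Finally the action is faithful: every element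
   is a combination of normally ordered words x^alpha d^beta, and among those
   with at least |beta| letters d only x^alpha d^beta itself has a nonzero
   (delta_beta, delta_alpha) entry. *)

Section LinearEndomorphisms.
Variables (R : comNzRingType) (I : finType).
Local Notation T := {ffun I -> nat}.

Definition linear_fun (u : (T -> R) -> T -> R) : Prop :=
  forall (c : R) (F G : T -> R),
    u (fun t => c * F t + G t) = fun t => c * u F t + u G t.

Record lend := Lend { lend_fun :> (T -> R) -> T -> R;
                      lend_linear : linear_fun lend_fun }.

Lemma lendP (u v : lend) : (forall F t, u F t = v F t) -> u = v.
Proof.
case: u v => [f fl] [g gl] /= fg.
have efg : f = g by apply/funext => F; apply/funext => t; exact: fg.
by subst g; congr Lend; exact: Prop_irrelevance.
Qed.

HB.instance Definition _ := gen_eqMixin lend.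
HB.instance Definition _ := gen_choiceMixin lend.

Lemma lend0 (u : lend) : u (fun=> 0) = fun=> 0.
Proof.
have := lend_linear u 1 (fun=> 0) (fun=> 0).
have -> : (fun _ : T => 1 * 0 + 0 : R) = (fun=> 0).
  by apply/funext => t; rewrite mul1r addr0.
move=> E; apply/funext => t; have := congr1 (fun F => F t) E; rewrite /= mul1r.
by move=> Et; apply: (@addrI _ (u (fun=> 0) t)); rewrite addr0 -Et.
Qed.

Lemma lendD (u : lend) F G : u (fun t => F t + G t) = fun t => u F t + u G t.
Proof.
have := lend_linear u 1 F G.
have -> : (fun t => 1 * F t + G t) = (fun t => F t + G t).
  by apply/funext => t; rewrite mul1r.
by move=> ->; apply/funext => t; rewrite mul1r.
Qed.

Lemma lendZ (u : lend) c F : u (fun t => c * F t) = fun t => c * u F t.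
Proof.
have := lend_linear u c F (fun=> 0).
have -> : (fun t => c * F t + 0) = (fun t => c * F t).
  by apply/funext => t; rewrite addr0.
by move=> ->; rewrite lend0; apply/funext => t; rewrite addr0.
Qed.

Let zero_linear : linear_fun (fun _ _ => 0).
Proof. by move=> c F G; apply/funext => t; rewrite mulr0 addr0. Qed.
Let opp_linear (u : lend) : linear_fun (fun F t => - u F t).
Proof. by move=> c F G; apply/funext => t; rewrite lend_linear opprD mulrN. Qed.
Let add_linear (u v : lend) : linear_fun (fun F t => u F t + v F t).
Proof.
by move=> c F G; apply/funext => t; rewrite !lend_linear mulrDr addrACA.
Qed.
Let one_linear : linear_fun id. Proof. by []. Qed.
Let mul_linear (u v : lend) : linear_fun (fun F => u (v F)).
Proof. by move=> c F G; rewrite !lend_linear. Qed.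
Let scale_linear c (u : lend) : linear_fun (fun F t => c * u F t).
Proof.
move=> a F G; apply/funext => t.
by rewrite lend_linear mulrDr !mulrA [c * a]mulrC.
Qed.

Definition lend_zero := @Lend _ zero_linear.
Definition lend_opp u := @Lend _ (opp_linear u).
Definition lend_add u v := @Lend _ (add_linear u v).
Definition lend_one := @Lend _ one_linear.
Definition lend_mul u v := @Lend _ (mul_linear u v).
Definition lend_scale c u := @Lend _ (scale_linear c u).

Let lend_addA : associative lend_add.
Proof. by move=> u v w; apply: lendP => F t /=; rewrite addrA. Qed.
Let lend_addC : commutative lend_add.
Proof. by move=> u v; apply: lendP => F t /=; rewrite addrC. Qed.
Let lend_add0 : left_id lend_zero lend_add.
Proof. by move=> u; apply: lendP => F t /=; rewrite add0r. Qed.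
Let lend_addN : left_inverse lend_zero lend_opp lend_add.
Proof. by move=> u; apply: lendP => F t /=; rewrite addNr. Qed.

HB.instance Definition _ :=
  GRing.isZmodule.Build lend lend_addA lend_addC lend_add0 lend_addN.

Let lend_mulA : associative lend_mul. Proof. by move=> u v w; apply: lendP. Qed.
Let lend_mul1 : left_id lend_one lend_mul. Proof. by move=> u; apply: lendP. Qed.
Let lend_mulr1 : right_id lend_one lend_mul. Proof. by move=> u; apply: lendP. Qed.
Let lend_mulDl : left_distributive lend_mul lend_add.
Proof. by move=> u v w; apply: lendP. Qed.
Let lend_mulDr : right_distributive lend_mul lend_add.
Proof. by move=> u v w; apply: lendP => F t /=; rewrite lendD. Qed.
Let lend_one_neq0 : lend_one != lend_zero.
Proof.
apply/eqP => /(congr1 (fun u : lend => u (fun=> 1) [ffun=> 0%N])) /eqP.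
by rewrite oner_eq0.
Qed.

HB.instance Definition _ := GRing.Zmodule_isNzRing.Build lend
  lend_mulA lend_mul1 lend_mulr1 lend_mulDl lend_mulDr lend_one_neq0.

Let lend_scaleA a b (u : lend) : lend_scale a (lend_scale b u) = lend_scale (a * b) u.
Proof. by apply: lendP => F t /=; rewrite mulrA. Qed.
Let lend_scale1 : left_id 1 lend_scale.
Proof. by move=> u; apply: lendP => F t /=; rewrite mul1r. Qed.
Let lend_scaleDr : right_distributive lend_scale (@GRing.add lend).
Proof. by move=> a u v; apply: lendP => F t /=; rewrite mulrDr. Qed.
Let lend_scaleDl u : {morph lend_scale^~ u : a b / a + b}.
Proof. by move=> a b; apply: lendP => F t /=; rewrite mulrDl. Qed.

HB.instance Definition _ := GRing.Zmodule_isLmodule.Build R lend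
  lend_scaleA lend_scale1 lend_scaleDr lend_scaleDl.

Let lend_scaleAl a (u v : lend) : a *: (u * v) = (a *: u) * v.
Proof. by apply: lendP. Qed.
HB.instance Definition _ := GRing.Lmodule_isLalgebra.Build R lend lend_scaleAl.
Let lend_scaleAr a (u v : lend) : a *: (u * v) = u * (a *: v).
Proof. by apply: lendP => F t /=; rewrite lendZ. Qed.
HB.instance Definition _ := GRing.Lalgebra_isAlgebra.Build R lend lend_scaleAr.

Lemma lend_addE (u v : lend) F t : (u + v) F t = u F t + v F t. Proof. by []. Qed.
Lemma lend_scaleE c (u : lend) F t : (c *: u) F t = c * u F t. Proof. by []. Qed.
Lemma lend_mulE (u v : lend) F : (u * v) F = u (v F). Proof. by []. Qed.
Lemma lend_oneE F : (1 : lend) F = F. Proof. by []. Qed.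
Lemma lend_zeroE F t : (0 : lend) F t = 0. Proof. by []. Qed.
Lemma lend_natE (b : bool) F m : ((b%:R : lend) F m) = b%:R * F m.
Proof. by case: b; rewrite ?mul1r ?mul0r. Qed.

End LinearEndomorphisms.

Section LinearFunctions.
Variables (k : pzRingType) (U V : lmodType k) (f : U -> V).
Hypothesis f_lin : forall (c : k) u v, f (c *: u + v) = c *: f u + f v.

Lemma linear_fun0 : f 0 = 0.
Proof.
have := f_lin 1 0 0; rewrite !scale1r !addr0 -{1}[f 0]addr0.
by move/addrI/esym.
Qed.

Lemma linear_fun_sum (T : Type) (s : seq (k * T)) (G : T -> U) :
  f (\sum_(t <- s) t.1 *: G t.2) = \sum_(t <- s) t.1 *: f (G t.2).
Proof.
elim: s => [|t s IH]; first by rewrite !big_nil linear_fun0.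
by rewrite !big_cons f_lin IH.
Qed.

End LinearFunctions.

Lemma leq_sum_eq (I : finType) (a b : I -> nat) : (forall i, a i <= b i)%N ->
  (\sum_i b i <= \sum_i a i)%N -> forall i, a i = b i.
Proof.
move=> ab sba i; apply/eqP; rewrite eqn_leq ab /= leqNgt; apply/negP => lt_ab.
have : (\sum_i a i < \sum_i b i)%N.
  rewrite (bigD1 i) //= [X in (_ < X)%N](bigD1 i) //=.
  by rewrite -addSn leq_add // leq_sum.
by rewrite ltnNge sba.
Qed.

Lemma seq_argmin (T : eqType) (f : T -> nat) (s : seq T) t1 : t1 \in s ->
  exists2 t0, t0 \in s & forall t, t \in s -> (f t0 <= f t)%N.
Proof.
move=> t1s; have ex : exists n, has (fun t => f t == n) s.
  by exists (f t1); apply/hasP; exists t1.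
case: (ex_minnP ex) => m /hasP[t0 t0s /eqP ft0] min_m.
by exists t0 => // t ts; rewrite ft0; apply: min_m; apply/hasP; exists t.
Qed.

Lemma sbrE (k : pzRingType) (A : algType k) sgn pa pb (a b : A) :
  sbr sgn pa pb a b =
  a * b + ((if sgn then 1 else -1) * (-1) ^+ (pa && pb) : k) *: (b * a).
Proof.
rewrite /sbr; case: sgn; case: (pa && pb);
  by rewrite ?expr0 ?expr1 ?mul1r ?mulN1r ?opprK ?scale1r ?scaleN1r ?mulNr ?mul1r.
Qed.

Section CliffordWeyl.
Variables (p q : nat) (sgn : bool).
Local Notation N := (p + q)%N.
Local Notation letter := (bool * 'I_(p + q))%type.

Definition eps {k : pzRingType} (i j : 'I_N) : k :=
  (if sgn then 1 else -1) * (-1) ^+ (cw_par p i && cw_par p j).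

(* The pair (x_i, d_i) generates a Weyl algebra when [d_i, x_i] = 1 is a
   commutator, and a Clifford algebra (x_i^2 = 0) when it is an anticommutator. *)
Definition bosonic (i : 'I_N) : bool := sgn == cw_par p i.

Lemma eps2 (k : pzRingType) i j : eps i j * eps i j = 1 :> k.
Proof.
by rewrite /eps; case: sgn; case: (_ && _);
  rewrite ?expr0 ?expr1 ?mulN1r ?mul1r ?mulrNN ?mulr1 ?opprK.
Qed.

Lemma epsC (k : pzRingType) i j : eps i j = eps j i :> k.
Proof. by rewrite /eps andbC. Qed.

Lemma eps_diag (k : pzRingType) i : eps i i = (if bosonic i then -1 else 1) :> k.
Proof.
by rewrite /eps /bosonic andbb; case: sgn; case: (cw_par p i);
  rewrite ?expr0 ?expr1 ?mulN1r ?mul1r ?opprK.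
Qed.

(* Normal order: all x's before all d's, each block sorted by index. *)
Definition letter_rank (l : letter) : nat := if l.1 then val l.2 else (N + val l.2)%N.

Lemma letter_rank_inj : injective letter_rank.
Proof.
move=> [[] i] [[] j]; rewrite /letter_rank /= => h.
- by move/val_inj: h => ->.
- by have := ltn_ord i; rewrite h -ltn_subRL subnn.
- by have := ltn_ord j; rewrite -h -ltn_subRL subnn.
- by move/addnI/val_inj: h => ->.
Qed.

(* A fermionic letter may not repeat, since x_i^2 = d_i^2 = 0 for it. *)
Definition normal_pair (l1 l2 : letter) : bool :=
  (letter_rank l1 < letter_rank l2)%N || (l1 == l2) && bosonic l2.2.

Definition normal_word (u : seq letter) : bool := sorted normal_pair u.

Lemma normal_pair_rank l1 l2 : normal_pair l1 l2 -> (letter_rank l1 <= letter_rank l2)%N.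
Proof. by case/orP=> [/ltnW //|/andP[/eqP -> _]]. Qed.

Lemma normal_pair_trans : transitive normal_pair.
Proof.
move=> l2 l1 l3 /orP[h12|/andP[/eqP -> _]] // /orP[h23|/andP[/eqP <- _]].
  by rewrite /normal_pair (ltn_trans h12 h23).
by rewrite /normal_pair h12.
Qed.

Lemma normal_pair_anti : antisymmetric normal_pair.
Proof.
move=> l1 l2 /andP[/normal_pair_rank h12 /normal_pair_rank h21].
by apply: letter_rank_inj; apply/eqP; rewrite eqn_leq h12.
Qed.

Section NormalOrdering.
Variables (k : fieldType) (A : algType k) (x d : 'I_N -> A).
Hypotheses (two_neq0 : 2%:R != 0 :> k) (hrel : cw_relations p q sgn x d).
Local Notation word := (cw_word x d).
Local Notation letterA := (cw_letter x d).

Lemma word_nil : word [::] = 1.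
Proof. by rewrite /cw_word big_nil. Qed.
Lemma word_cons l w : word (l :: w) = letterA l * word w.
Proof. by rewrite /cw_word big_cons. Qed.
Lemma word_cat u v : word (u ++ v) = word u * word v.
Proof. by rewrite /cw_word big_cat. Qed.

Definition spanned (P : seq letter -> Prop) (a : A) : Prop :=
  exists s : seq (k * seq letter),
    a = \sum_(t <- s) t.1 *: word t.2 /\ forall t, t \in s -> P t.2.

Lemma spanned0 P : spanned P 0.
Proof. by exists [::]; rewrite big_nil. Qed.

Lemma spanned_word (P : seq letter -> Prop) w : P w -> spanned P (word w).
Proof.
by exists [:: (1, w)]; rewrite big_seq1 scale1r; split=> // t; rewrite inE => /eqP ->.
Qed.

Lemma spanned_add P a b : spanned P a -> spanned P b -> spanned P (a + b).
Proof.
move=> [s1 [-> h1]] [s2 [-> h2]]; exists (s1 ++ s2); rewrite big_cat.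
by split=> // t; rewrite mem_cat => /orP[]; [apply: h1 | apply: h2].
Qed.

Lemma spanned_scale P c a : spanned P a -> spanned P (c *: a).
Proof.
move=> [s [-> h]]; exists [seq (c * t.1, t.2) | t <- s]; split.
  by rewrite big_map scaler_sumr; apply: eq_bigr => t _; rewrite scalerA.
by move=> _ /mapP[t ts ->]; exact: (h t).
Qed.

Lemma spanned_sum P (s : seq (k * seq letter)) (G : seq letter -> A) :
  (forall t, t \in s -> spanned P (G t.2)) -> spanned P (\sum_(t <- s) t.1 *: G t.2).
Proof.
elim: s => [|t s IH] span_s; first by rewrite big_nil; exact: spanned0.
rewrite big_cons; apply: spanned_add; first by apply/spanned_scale/span_s/mem_head.
by apply: IH => t' t's; apply: span_s; rewrite inE t's orbT.
Qed.

Lemma spanned_lmul (P Q : seq letter -> Prop) l a : spanned P a ->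
  (forall u, P u -> spanned Q (word (l :: u))) -> spanned Q (letterA l * a).
Proof.
move=> [s [-> Ps]] PQ; elim: s Ps => [|t s IH] Ps.
  by rewrite big_nil mulr0; exact: spanned0.
rewrite big_cons mulrDr -scalerAr -word_cons; apply: spanned_add.
  by apply/spanned_scale/PQ/Ps; rewrite inE eqxx.
by apply: IH => t' t's; apply: Ps; rewrite inE t's orbT.
Qed.

Lemma letter_swap l1 l2 : (letter_rank l2 < letter_rank l1)%N ->
  letterA l1 * letterA l2 = (- eps l1.2 l2.2) *: (letterA l2 * letterA l1) +
    [&& ~~ l1.1, l2.1 & l1.2 == l2.2]%:R.
Proof.
case: hrel => hDX hXX hDD.
case: l1 l2 => [[] i] [[] j]; rewrite /letter_rank /cw_letter /= => h.
- move/eqP: (hXX i j); rewrite sbrE -/(eps i j) addr_eq0 => /eqP ->.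
  by rewrite scaleNr addr0.
- by move: h; rewrite ltnNge (leq_trans (ltnW (ltn_ord i)) (leq_addr _ _)).
- by rewrite scaleNr -(hDX i j) sbrE -/(eps i j) addrC addrK.
- move/eqP: (hDD i j); rewrite sbrE -/(eps i j) addr_eq0 => /eqP ->.
  by rewrite scaleNr addr0.
Qed.

Lemma letter_sq0 l : ~~ bosonic l.2 -> letterA l * letterA l = 0.
Proof.
case: hrel => _ hXX hDD.
have sq0 i (u : A) : ~~ bosonic i -> u + eps i i *: u = 0 -> u = 0.
  move=> fi; rewrite eps_diag (negPf fi) scale1r => /eqP.
  by rewrite -mulr2n -scaler_nat scaler_eq0 (negPf two_neq0) => /eqP.
case: l => [[] i] /= fi; apply: sq0 fi _.
- by have := hXX i i; rewrite sbrE.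
- by have := hDD i i; rewrite sbrE.
Qed.

Lemma normal_word_cons l y v : normal_word (y :: v) -> normal_pair l y ->
  normal_word (l :: y :: v).
Proof. by rewrite /normal_word /= => -> ->. Qed.

Lemma normal_word_head y u v : normal_word (y :: v) -> normal_word u ->
  (forall z, z \in u -> z \in v \/ (letter_rank y < letter_rank z)%N) ->
  normal_word (y :: u).
Proof.
move=> nyv nu uv; rewrite /normal_word /= (path_sortedE normal_pair_trans).
rewrite [sorted _ _]nu andbT; have yv := order_path_min normal_pair_trans nyv.
apply/allP => z /uv[/(allP yv) // | lt_yz].
by rewrite /normal_pair lt_yz.
Qed.

(* The support bound {subset u <= l :: v} keeps the head of v in front of u
   after x_l has been commuted past it. *)
Lemma normal_insert v l : normal_word v ->
  spanned (fun u => normal_word u /\ {subset u <= l :: v}) (word (l :: v)).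
Proof.
elim: v l => [|y v IH] l nv; first by apply: spanned_word; split.
have nv' : normal_word v := path_sorted nv.
have [ly|] := boolP (normal_pair l y).
  by apply: spanned_word; split; [exact: normal_word_cons|].
rewrite /normal_pair negb_or -leqNgt => /andP[le_yl nly].
move: le_yl; rewrite leq_eqVlt => /orP[/eqP/esym/letter_rank_inj eyl|lt_yl].
  move: nly; rewrite eyl eqxx /= => fy.
  by rewrite !word_cons mulrA letter_sq0 // mul0r; exact: spanned0.
rewrite !word_cons mulrA letter_swap // mulrDl -scalerAl -mulrA.
apply: spanned_add; last first.
  case: [&& _, _ & _]; rewrite ?mul1r ?mul0r; last exact: spanned0.
  by apply: spanned_word; split=> // z zv; rewrite !inE zv !orbT.
apply: spanned_scale; rewrite -word_cons.
apply: (spanned_lmul (IH l nv')) => u [nu su].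
apply: spanned_word; split; last first.
  move=> z; rewrite !inE => /orP[->|/su]; first by rewrite orbT.
  by rewrite inE => /orP[->|->]; rewrite ?orbT.
apply: normal_word_head nv nu _ => z /su; rewrite inE => /orP[/eqP ->|];
  by [right | left].
Qed.

Lemma word_normal_spanned w : spanned normal_word (word w).
Proof.
elim: w => [|l w IH]; first by apply: spanned_word.
rewrite word_cons; apply: spanned_lmul IH _ => u nu.
by have [s [-> Ps]] := normal_insert l nu; exists s; split=> // t /Ps[].
Qed.

End NormalOrdering.

Local Notation occ := ({ffun 'I_(p + q) -> nat} : Type).

Definition raise (j : 'I_N) (m : occ) : occ := [ffun l => (m l + (l == j))%N].
Definition lower (j : 'I_N) (m : occ) : occ := [ffun l => (m l - (l == j))%N].

Lemma raiseE j (m : occ) l : raise j m l = (m l + (l == j))%N. Proof. by rewrite ffunE. Qed.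
Lemma lowerE j (m : occ) l : lower j m l = (m l - (l == j))%N. Proof. by rewrite ffunE. Qed.

Lemma raiseK j : cancel (raise j) (lower j).
Proof. by move=> m; apply/ffunP => l; rewrite lowerE raiseE addnK. Qed.

Lemma lowerK j (m : occ) : (0 < m j)%N -> raise j (lower j m) = m.
Proof.
move=> mj; apply/ffunP => l; rewrite raiseE lowerE.
by case: eqP => [->|_]; rewrite ?subn0 ?addn0 // subnK.
Qed.

Lemma raise_lower i j (m : occ) : i != j -> raise i (lower j m) = lower j (raise i m).
Proof.
move=> ij; apply/ffunP => l; rewrite !(raiseE, lowerE).
by case: (eqVneq l i) => [->|_]; rewrite ?(negPf ij) ?subn0 ?addn0.
Qed.

Lemma raiseC i j (m : occ) : raise i (raise j m) = raise j (raise i m).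
Proof. by apply/ffunP => l; rewrite !raiseE addnAC. Qed.

Lemma lowerC i j (m : occ) : lower i (lower j m) = lower j (lower i m).
Proof. by apply/ffunP => l; rewrite !lowerE subnAC. Qed.

Definition occ_shift (g : occ) (e : 'I_N -> int) : occ :=
  [ffun j => absz ((g j)%:Z + e j)].

Definition lshift (l : letter) (g : occ) : occ :=
  if l.1 then raise l.2 g else lower l.2 g.

Fixpoint wshift (w : seq letter) (g : occ) : occ :=
  if w is l :: w' then lshift l (wshift w' g) else g.

Lemma wshift_cat u v g : wshift (u ++ v) g = wshift u (wshift v g).
Proof. by elim: u => //= l u ->. Qed.

Definition letter_star (l : letter) : letter := (~~ l.1, l.2).
Definition word_star (w : seq letter) : seq letter := rev (map letter_star w).

Lemma wdeg_cons (l : letter) w j : cw_wdeg (l :: w) j =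
  (if l.2 == j then (if l.1 then 1 else -1) else 0) + cw_wdeg w j.
Proof. by rewrite /cw_wdeg big_cons. Qed.

Lemma wdeg_count (w : seq letter) j :
  cw_wdeg w j = (count_mem (true, j) w)%:Z - (count_mem (false, j) w)%:Z.
Proof.
elim: w => [|l w IH]; first by rewrite /cw_wdeg big_nil.
rewrite wdeg_cons IH; case: l => [[] i] /=; rewrite !xpair_eqE /=;
  case: (i == j) => /=; rewrite ?add0n ?PoszD; ring.
Qed.


Lemma normal_word_split u : normal_word u ->
  u = [seq l <- u | l.1] ++ [seq l <- u | ~~ l.1].
Proof.
elim: u => [|l u IH] //= nu; have nu' : normal_word u := path_sorted nu.
case: (boolP l.1) => xl /=; first by rewrite -IH.
have du : all (fun z : letter => ~~ z.1) u.
  apply/allP => z zu; have := allP (order_path_min normal_pair_trans nu) z zu.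
  move/normal_pair_rank; rewrite /letter_rank (negPf xl); case: (z.1) => //=.
  by rewrite leqNgt (leq_trans (ltn_ord z.2) (leq_addr _ _)).
rewrite (all_filterP du); suff -> : [seq z <- u | z.1] = [::] by [].
by apply/eqP; rewrite -[_ == _]negbK -has_filter -all_predC.
Qed.

Lemma count_letter_filter (P : pred bool) (u : seq letter) b j :
  count_mem (b, j) [seq l <- u | P l.1] = if P b then count_mem (b, j) u else 0%N.
Proof.
rewrite count_filter; case: ifP => Pb.
  by apply: eq_count => z /=; case: (eqVneq z (b, j)) => [->|]; rewrite ?Pb.
rewrite -(count_pred0 u); apply: eq_count => z /=.
by case: (eqVneq z (b, j)) => [->|] //=; rewrite Pb.
Qed.

Lemma normal_count_fermion u l : normal_word u -> ~~ bosonic l.2 ->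
  (count_mem l u <= 1)%N.
Proof.
elim: u => [|y u IH] //= nu fl; have [eyl|_] := eqVneq y l; last first.
  exact: IH (path_sorted nu) fl.
rewrite -eyl in fl *; suff /count_memPn -> : y \notin u by [].
apply/negP => /(allP (order_path_min normal_pair_trans nu)).
by rewrite /normal_pair ltnn eqxx (negPf fl).
Qed.

Lemma normal_word_eq u v : normal_word u -> normal_word v ->
  (forall l, count_mem l u = count_mem l v) -> u = v.
Proof.
move=> nu nv cuv; apply: (sorted_eq normal_pair_trans normal_pair_anti nu nv).
by apply/allP => l _; apply/eqP; exact: cuv.
Qed.

Definition x_occ (u : seq letter) : occ := [ffun i => count_mem (true, i) u].
Definition d_occ (u : seq letter) : occ := [ffun i => count_mem (false, i) u].
Definition d_length (u : seq letter) : nat := \sum_i count_mem (false, i) u.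

Section Fock.
Variable k : idomainType.
Local Notation E := (lend k 'I_(p + q)).
Local Notation eps := (@eps k).

(* Jordan-Wigner sign: moving x_i or d_i past the particles of lower index. *)
Definition jw_sign (i : 'I_N) (m : occ) : k :=
  \prod_(j < N | (j < i)%N) (- eps i j) ^+ m j.
Definition jw_step (i j : 'I_N) : k := if (j < i)%N then - eps i j else 1.

Lemma jw_sign_raise i j (m : occ) : jw_sign i (raise j m) = jw_sign i m * jw_step i j.
Proof.
rewrite /jw_sign /jw_step; under eq_bigr => l _ do rewrite raiseE exprD.
rewrite big_split /=; congr (_ * _); case: ifP => ji.
  rewrite (bigD1 j) //= eqxx expr1 big1 ?mulr1 // => l /andP[_ /negPf ->].
  by rewrite expr0.
rewrite big1 // => l li; case: eqP => [El|_]; last by rewrite expr0.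
by move: li; rewrite El ji.
Qed.

Lemma jw_step2 i j : jw_step i j * jw_step i j = 1.
Proof. by rewrite /jw_step; case: ifP; rewrite ?mulrNN ?eps2 ?mulr1. Qed.

Lemma jw_sign_lower i j (m : occ) : (0 < m j)%N ->
  jw_sign i (lower j m) = jw_sign i m * jw_step i j.
Proof. by move=> mj; rewrite -{2}(lowerK mj) jw_sign_raise -mulrA jw_step2 mulr1. Qed.

Lemma jw_sign_raise_diag i (m : occ) : jw_sign i (raise i m) = jw_sign i m.
Proof. by rewrite jw_sign_raise /jw_step ltnn mulr1. Qed.

Lemma jw_sign2 i (m : occ) : jw_sign i m * jw_sign i m = 1.
Proof.
rewrite /jw_sign -big_split /=; apply: big1 => j _.
by rewrite -exprMn mulrNN eps2 expr1n.
Qed.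

Lemma jw_step_swap i j : i != j -> jw_step j i + eps i j * jw_step i j = 0.
Proof.
move=> ij; rewrite /jw_step; case: (ltngtP i j) => h.
- by rewrite mulr1 epsC addNr.
- by rewrite mulrN eps2 subrr.
- by move/val_inj: h ij => ->; rewrite eqxx.
Qed.

(* Fermionic occupation numbers only matter modulo 2. *)
Definition xcoef (i : 'I_N) (a : nat) : bool := if bosonic i then (0 < a)%N else odd a.
Definition dcoef (i : 'I_N) (a : nat) : k := if bosonic i then a%:R else (odd a)%:R.

Lemma xcoef_gt0 i a : xcoef i a -> (0 < a)%N.
Proof. by rewrite /xcoef; case: bosonic => //; case: a. Qed.

Lemma dcoef0 i : dcoef i 0 = 0.
Proof. by rewrite /dcoef; case: bosonic. Qed.

Lemma coef_DX i a :
  dcoef i a.+1 * (xcoef i a.+1)%:R + eps i i * ((xcoef i a)%:R * dcoef i a) = 1.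
Proof.
rewrite eps_diag /dcoef /xcoef; case: (bosonic i) => /=.
  by case: a => [|a] /=; ring.
by case: (odd a) => /=; ring.
Qed.

Lemma coef_XX i a : (1 + eps i i) * ((xcoef i a)%:R * (xcoef i a.-1)%:R) = 0.
Proof.
rewrite eps_diag /xcoef; case: (bosonic i) => /=; first ring.
case: a => [|a] /=; first ring.
by case: (odd a) => /=; ring.
Qed.

Lemma coef_DD i a : (1 + eps i i) * (dcoef i a.+1 * dcoef i a.+2) = 0.
Proof.
rewrite eps_diag /dcoef; case: (bosonic i) => /=; first ring.
by case: (odd a) => /=; ring.
Qed.

Definition fock_x_fun (i : 'I_N) (F : occ -> k) (m : occ) : k :=
  (xcoef i (m i))%:R * jw_sign i m * F (lower i m).
Definition fock_d_fun (i : 'I_N) (F : occ -> k) (m : occ) : k :=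
  jw_sign i m * dcoef i (m i).+1 * F (raise i m).

Lemma fock_x_linear i : linear_fun (fock_x_fun i).
Proof. by move=> c F G; apply/funext => m; rewrite /fock_x_fun; ring. Qed.
Lemma fock_d_linear i : linear_fun (fock_d_fun i).
Proof. by move=> c F G; apply/funext => m; rewrite /fock_d_fun; ring. Qed.

Definition fock_x i : E := Lend (fock_x_linear i).
Definition fock_d i : E := Lend (fock_d_linear i).

Lemma fock_DX i j :
  sbr sgn (cw_par p i) (cw_par p j) (fock_d i) (fock_x j) = (i == j)%:R.
Proof.
apply: lendP => F m; rewrite sbrE lend_addE lend_scaleE !lend_mulE lend_natE.
rewrite -/(eps i j) /= /fock_x_fun /fock_d_fun.
case: (eqVneq i j) => [<-|ij].
  rewrite raiseE eqxx addn1 raiseK jw_sign_raise_diag mul1r.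
  have K := coef_DX i (m i); case: (boolP (xcoef i (m i))) => hx.
    have mi := xcoef_gt0 hx.
    rewrite jw_sign_lower // /jw_step ltnn mulr1 lowerE eqxx subn1 prednK //.
    rewrite lowerK // hx mulr1n in K *.
    transitivity (jw_sign i m * jw_sign i m * (dcoef i (m i).+1 *
      (xcoef i (m i).+1)%:R + eps i i * (1 * dcoef i (m i))) * F m); first ring.
    by rewrite jw_sign2 K !mul1r.
  rewrite (negPf hx) mulr0n mul0r mulr0 addr0 in K *.
  transitivity (jw_sign i m * jw_sign i m *
    (dcoef i (m i).+1 * (xcoef i (m i).+1)%:R) * F m); first ring.
  by rewrite jw_sign2 K !mul1r.
rewrite mulr0n mul0r raiseE lowerE ?(eq_sym j i) ?(negPf ij) addn0 subn0 raise_lower //.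
case: (boolP (xcoef j (m j))) => hx; last by rewrite !mulr0n; ring.
rewrite mulr1n jw_sign_raise jw_sign_lower ?(xcoef_gt0 hx) //.
transitivity (jw_sign i m * jw_sign j m * dcoef i (m i).+1 *
  F (lower j (raise i m)) * (jw_step j i + eps i j * jw_step i j)); first ring.
by rewrite jw_step_swap // mulr0.
Qed.

Lemma fock_XX i j :
  sbr sgn (cw_par p i) (cw_par p j) (fock_x i) (fock_x j) = 0.
Proof.
apply: lendP => F m; rewrite sbrE lend_addE lend_scaleE !lend_mulE lend_zeroE.
rewrite -/(eps i j) /= /fock_x_fun.
case: (eqVneq i j) => [<-|ij].
  case: (boolP (xcoef i (m i))) => hx; last by rewrite !mulr0n; ring.
  rewrite jw_sign_lower ?(xcoef_gt0 hx) // /jw_step ltnn mulr1 lowerE eqxx subn1.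
  have K := coef_XX i (m i); rewrite hx mulr1n in K; rewrite !mulr1n.
  transitivity (jw_sign i m * jw_sign i m * F (lower i (lower i m)) *
    ((1 + eps i i) * (1 * (xcoef i (m i).-1)%:R))); first ring.
  by rewrite K mulr0.
rewrite !lowerE (negPf ij) eq_sym (negPf ij) !subn0 lowerC.
case: (boolP (xcoef j (m j))) => hj; last by rewrite !mulr0n; ring.
case: (boolP (xcoef i (m i))) => hi; last by rewrite !mulr0n; ring.
rewrite !mulr1n jw_sign_lower ?(xcoef_gt0 hi) // jw_sign_lower ?(xcoef_gt0 hj) //.
transitivity (jw_sign i m * jw_sign j m * F (lower i (lower j m)) *
  (jw_step j i + eps i j * jw_step i j)); first ring.
by rewrite jw_step_swap // mulr0.
Qed.

Lemma fock_DD i j :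
  sbr sgn (cw_par p i) (cw_par p j) (fock_d i) (fock_d j) = 0.
Proof.
apply: lendP => F m; rewrite sbrE lend_addE lend_scaleE !lend_mulE lend_zeroE.
rewrite -/(eps i j) /= /fock_d_fun.
case: (eqVneq i j) => [<-|ij].
  rewrite jw_sign_raise_diag raiseE eqxx addn1.
  transitivity (jw_sign i m * jw_sign i m * F (raise i (raise i m)) *
    ((1 + eps i i) * (dcoef i (m i).+1 * dcoef i (m i).+2))); first ring.
  by rewrite coef_DD mulr0.
rewrite !raiseE (negPf ij) eq_sym (negPf ij) !addn0 raiseC !jw_sign_raise.
transitivity (jw_sign i m * jw_sign j m * dcoef i (m i).+1 * dcoef j (m j).+1 *
  F (raise i (raise j m)) * (jw_step j i + eps i j * jw_step i j)); first ring.
by rewrite jw_step_swap // mulr0.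
Qed.

Lemma fock_relations : cw_relations p q sgn fock_x fock_d.
Proof. by split; [exact: fock_DX | exact: fock_XX | exact: fock_DD]. Qed.

Definition dirac (g : occ) (m : occ) : k := (m == g)%:R.

Definition lcoef (l : letter) (g : occ) : k :=
  if l.1 then (xcoef l.2 (g l.2).+1)%:R * jw_sign l.2 g
  else jw_sign l.2 g * dcoef l.2 (g l.2).

Fixpoint wcoef (w : seq letter) (g : occ) : k :=
  if w is l :: w' then wcoef w' g * lcoef l (wshift w' g) else 1.

Lemma wcoef_cat u v g : wcoef (u ++ v) g = wcoef v g * wcoef u (wshift v g).
Proof. by elim: u => [|l u IH] /=; rewrite ?mulr1 // IH wshift_cat mulrA. Qed.

Lemma fock_letter_dirac l g :
  cw_letter fock_x fock_d l (dirac g) = fun m => lcoef l g * dirac (lshift l g) m.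
Proof.
apply/funext => m; case: l => [[] i]; rewrite /cw_letter /lcoef /lshift /dirac /=.
  rewrite /fock_x_fun; case: (eqVneq m (raise i g)) => [->|mg].
    by rewrite raiseE eqxx addn1 raiseK eqxx jw_sign_raise_diag.
  rewrite mulr0; case: (eqVneq (lower i m) g) => [eg|]; last by rewrite mulr0.
  case: (posnP (m i)) => [m0|mp]; last by move: mg; rewrite -eg lowerK // eqxx.
  by rewrite m0 /xcoef; case: (bosonic i); rewrite /= !mul0r.
rewrite /fock_d_fun; case: (eqVneq m (lower i g)) => [->|mg].
  case: (posnP (g i)) => [g0|gp].
    rewrite g0 dcoef0 mulr0 mul0r; case: eqP => [eq_m|_]; last by rewrite mulr0.
    by have := congr1 (fun h : occ => h i) eq_m; rewrite raiseE lowerE eqxx g0.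
  rewrite (lowerK gp) eqxx mulr1n jw_sign_lower // /jw_step ltnn !mulr1.
  by rewrite lowerE eqxx subn1 prednK.
rewrite mulr0n mulr0; case: eqP => [eq_m|]; last by rewrite mulr0n mulr0.
by move: mg; rewrite -eq_m raiseK eqxx.
Qed.

Lemma fock_word_dirac w g :
  cw_word fock_x fock_d w (dirac g) = fun m => wcoef w g * dirac (wshift w g) m.
Proof.
elim: w => [|l w IH].
  by rewrite /cw_word big_nil lend_oneE; apply/funext => m /=; rewrite mul1r.
rewrite /cw_word big_cons -/(cw_word _ _ w) lend_mulE IH lendZ fock_letter_dirac.
by apply/funext => m /=; rewrite mulrA.
Qed.

Definition wentry (w : seq letter) (g h : occ) : k := wcoef w g * (wshift w g == h)%:R.

Lemma wshift_deg w g : wcoef w g != 0 ->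
  forall j, (wshift w g j)%:Z = (g j)%:Z + cw_wdeg w j.
Proof.
elim: w => [|l w IH] /=; first by move=> _ j; rewrite /cw_wdeg big_nil addr0.
rewrite mulf_eq0 negb_or => /andP[nz_w nz_l] j; rewrite wdeg_cons addrCA -IH //.
case: l nz_l => [[] i]; rewrite /lcoef /lshift /=.
  move=> _; rewrite raiseE (eq_sym i j).
  by case: (j == i); rewrite /= ?addn0 ?add0r // PoszD addrC.
set z := wshift w g => nz_l; rewrite lowerE eq_sym.
case: (eqVneq i j) => [<-|_]; last by rewrite subn0 add0r.
have zi : (0 < z i)%N by move: nz_l; case: posnP => // ->; rewrite dcoef0 mulr0 eqxx.
by rewrite /= -subzn // addrC.
Qed.

Lemma wshift_eq w g (h : occ) : wcoef w g != 0 ->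
  (forall j, (h j)%:Z = (g j)%:Z + cw_wdeg w j) -> wshift w g = h.
Proof.
move=> nz_w deg_h; apply/ffunP => j; apply/eqP.
by rewrite -eqz_nat (wshift_deg nz_w) deg_h.
Qed.

Lemma wcount_le w g : wcoef w g != 0 ->
  forall j, (count_mem (false, j) w <= g j + count_mem (true, j) w)%N.
Proof.
move=> nz_w j; rewrite -lez_nat PoszD -subr_ge0.
by rewrite -addrA -wdeg_count -(wshift_deg nz_w).
Qed.

Lemma homogeneous_entry (s : seq (k * seq letter)) (e : 'I_N -> int) (g h : occ) :
  (forall t, t \in s -> forall j, cw_wdeg t.2 j = e j) ->
  \sum_(t <- s) t.1 * wentry t.2 g h =
  (\sum_(t <- s) t.1 * wentry t.2 g (occ_shift g e)) * (occ_shift g e == h)%:R.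
Proof.
move=> deg_s; rewrite mulr_suml big_seq [RHS]big_seq; apply: eq_bigr => t ts.
rewrite -mulrA /wentry; have [->|nz_t] := eqVneq (wcoef t.2 g) 0; first by rewrite !mul0r.
rewrite (wshift_eq nz_t (h := occ_shift g e)) ?eqxx ?mulr1n ?mulr1 // => j.
by rewrite ffunE -(deg_s t ts j) -(wshift_deg nz_t j) absz_nat.
Qed.

(* The adjoint of x_i is d_i for the diagonal weight prod_(i bosonic) m_i! *)
Definition fock_weight (g : occ) : k := \prod_(i < N | bosonic i) ((g i)`!)%:R.

Lemma fock_weight_raise i g : fock_weight (raise i g) =
  fock_weight g * (if bosonic i then (g i).+1%:R else 1).
Proof.
rewrite /fock_weight; case: (boolP (bosonic i)) => bi.
  rewrite (bigD1 i) //= [in RHS](bigD1 i) //=.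
  rewrite (eq_bigr (fun j => ((g j)`!)%:R)); last first.
    by move=> j /andP[_ ji]; rewrite raiseE (negPf ji) addn0.
  by rewrite raiseE eqxx addn1 factS natrM; ring.
rewrite mulr1; apply: eq_bigr => j bj; rewrite raiseE.
by case: eqP => [ji|]; [move: bi; rewrite -ji bj | rewrite addn0].
Qed.

Lemma letter_adjoint l g h :
  lcoef l g * (lshift l g == h)%:R * fock_weight h =
  lcoef (letter_star l) h * (lshift (letter_star l) h == g)%:R * fock_weight g.
Proof.
suff adjX i g' h' : lcoef (true, i) g' * (lshift (true, i) g' == h')%:R *
    fock_weight h' =
  lcoef (false, i) h' * (lshift (false, i) h' == g')%:R * fock_weight g'.
  by case: l => [[] i]; [apply: adjX | symmetry; apply: adjX].
rewrite /lcoef /lshift /=; case: (eqVneq h' (raise i g')) => [->|hg].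
  rewrite raiseK eqxx jw_sign_raise_diag fock_weight_raise raiseE eqxx addn1.
  by rewrite /xcoef /dcoef; case: (bosonic i) => /=; ring.
rewrite mulr0n mulr0 mul0r; case: (eqVneq (lower i h') g') => [eg|]; last first.
  by rewrite mulr0n mulr0 mul0r.
case: (posnP (h' i)) => [h0|hp]; first by rewrite h0 dcoef0 mulr0 !mul0r.
by move: hg; rewrite -eg lowerK // eqxx.
Qed.

Lemma wentry_adjoint w g h :
  wentry w g h * fock_weight h = wentry (word_star w) h g * fock_weight g.
Proof.
elim: w h => [|l w IH] h.
  rewrite /wentry /word_star /= !mul1r eq_sym.
  by case: eqP => [->|_] //; rewrite mulr0n !mul0r.
rewrite /word_star /= rev_cons -cats1 -/(word_star w) /wentry wcoef_cat wshift_cat.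
rewrite /= mul1r; set z := wshift w g; set th := lshift (letter_star l) h.
have adj_l := letter_adjoint l z h; have := IH th; rewrite /wentry -/z => adj_w.
transitivity (wcoef w g * (lcoef (letter_star l) h * (th == z)%:R * fock_weight z)).
  by rewrite -adj_l; ring.
transitivity (lcoef (letter_star l) h *
  (wcoef (word_star w) th * (wshift (word_star w) th == g)%:R * fock_weight g));
  last by ring.
by rewrite -adj_w; case: (eqVneq th z) => [->|_]; rewrite ?mulr1n ?mulr0n; ring.
Qed.

Lemma jw_sign_neq0 i g : jw_sign i g != 0.
Proof.
by apply/eqP => s0; have := jw_sign2 i g; rewrite s0 mul0r => /eqP; rewrite eq_sym oner_eq0.
Qed.

Lemma wcoef_xword_neq0 v (g : occ) : all (fun l => l.1) v ->
  (forall i, ~~ bosonic i -> g i + count_mem (true, i) v <= 1)%N -> wcoef v g != 0.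
Proof.
elim: v => [|[[] i] v IH] //= in g *; first by rewrite oner_eq0.
move=> xv fg; have nz_v : wcoef v g != 0.
  by apply: IH => // j fj; apply: leq_trans (fg j fj); rewrite leq_add2l leq_addl.
rewrite mulf_neq0 // /lcoef mulf_neq0 ?jw_sign_neq0 //= /xcoef.
case: (boolP (bosonic i)) => [_|fi]; first by rewrite oner_eq0.
have := wshift_deg nz_v i; rewrite wdeg_count.
have /count_memPn -> : (false, i) \notin v by apply/negP => /(allP xv).
rewrite subr0 -PoszD => -[->].
have := fg i fi; rewrite /= eqxx add1n addnS ltnS leqn0 => /eqP ->.
by rewrite oner_eq0.
Qed.

Section CharacteristicZero.
Hypothesis char0 : [pchar k] =i pred0.

Lemma natr_neq0 m : (0 < m)%N -> m%:R != 0 :> k.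
Proof. by move/pcharf0P: char0 => ->; rewrite -lt0n. Qed.

Lemma fock_weight_neq0 g : fock_weight g != 0.
Proof. by apply/prodf_neq0 => i _; apply/natr_neq0/fact_gt0. Qed.

Lemma wcoef_dword_neq0 v (g : occ) : all (fun l => ~~ l.1) v ->
  (forall i, count_mem (false, i) v <= g i)%N ->
  (forall i, ~~ bosonic i -> g i <= 1)%N -> wcoef v g != 0.
Proof.
elim: v => [|[[] i] v IH] //= in g *; first by rewrite oner_eq0.
move=> dv vg fg; have nz_v : wcoef v g != 0.
  by apply: IH => // j; apply: leq_trans (vg j); rewrite leq_addl.
rewrite mulf_neq0 // /lcoef mulf_neq0 ?jw_sign_neq0 //=.
have := wshift_deg nz_v i; rewrite wdeg_count.
have /count_memPn -> : (true, i) \notin v by apply/negP => /(allP dv).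
rewrite sub0r => /eqP; rewrite -subr_eq opprK -PoszD eqz_nat => /eqP shift_i.
have := vg i; rewrite /= eqxx add1n -shift_i -{1}[count_mem _ v]add0n ltn_add2r.
move=> sh_gt0; rewrite /dcoef; case: (boolP (bosonic i)) => [_|fi].
  exact: natr_neq0.
have := fg i fi; rewrite -shift_i => le1.
have -> : wshift v g i = 1%N.
  by apply/eqP; rewrite eqn_leq sh_gt0 andbT (leq_trans (leq_addr _ _) le1).
by rewrite oner_eq0.
Qed.

Lemma normal_wentry_self u : normal_word u -> wentry u (d_occ u) (x_occ u) != 0.
Proof.
move=> nu; have split_u := normal_word_split nu.
set ux := [seq l <- u | l.1] in split_u; set ud := [seq l <- u | ~~ l.1] in split_u.
have nz_d : wcoef ud (d_occ u) != 0.
  apply: wcoef_dword_neq0; first exact: filter_all.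
    by move=> i; rewrite (count_letter_filter negb) ffunE.
  by move=> i fi; rewrite ffunE; apply: normal_count_fermion.
have shift_d : wshift ud (d_occ u) = [ffun=> 0%N].
  apply: wshift_eq nz_d _ => j; rewrite wdeg_count !ffunE.
  by rewrite !(count_letter_filter negb) /=; ring.
have nz_u : wcoef u (d_occ u) != 0.
  rewrite {1}split_u wcoef_cat mulf_neq0 // shift_d.
  apply: wcoef_xword_neq0; first exact: filter_all.
  by move=> i fi; rewrite ffunE add0n (count_letter_filter id); apply: normal_count_fermion.
rewrite /wentry (wshift_eq nz_u (h := x_occ u)) ?eqxx ?mulr1n ?mulr1 //.
by move=> j; rewrite wdeg_count !ffunE; ring.
Qed.

Lemma normal_wentry_unique u u0 : normal_word u -> normal_word u0 ->
  (d_length u0 <= d_length u)%N -> wentry u (d_occ u0) (x_occ u0) != 0 -> u = u0.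
Proof.
move=> nu nu0 le_len; rewrite /wentry mulf_eq0 negb_or => /andP[nz_u].
case: (wshift u (d_occ u0) =P x_occ u0) => [shift_u _|_]; last by rewrite mulr0n eqxx.
have nz_d : wcoef [seq l <- u | ~~ l.1] (d_occ u0) != 0.
  by move: nz_u; rewrite {1}(normal_word_split nu) wcoef_cat mulf_eq0 negb_or => /andP[].
have d_le j : (count_mem (false, j) u <= d_occ u0 j)%N.
  have := wcount_le nz_d j.
  by rewrite !(count_letter_filter negb) /= addn0.
have d_eq : forall j, count_mem (false, j) u = d_occ u0 j.
  apply: leq_sum_eq => //; apply: leq_trans le_len.
  by apply/eq_leq/eq_bigr => i _; rewrite ffunE.
have x_eq j : count_mem (true, j) u = x_occ u0 j.
  apply/eqP; rewrite -eqz_nat -shift_u (wshift_deg nz_u) wdeg_count -d_eq.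
  by apply/eqP; ring.
by apply: normal_word_eq => // -[[] j]; rewrite ?x_eq ?d_eq ffunE.
Qed.

Lemma normal_min_coef_eq0 (s : seq (k * seq letter)) t0 :
  (forall t, t \in s -> normal_word t.2) ->
  (forall g h, \sum_(t <- s) t.1 * wentry t.2 g h = 0) ->
  t0 \in s -> (forall t, t \in s -> d_length t0.2 <= d_length t.2)%N ->
  \sum_(t <- s | t.2 == t0.2) t.1 = 0.
Proof.
move=> ns s0 t0s min_t0; set u0 := t0.2.
have := s0 (d_occ u0) (x_occ u0); rewrite (bigID (fun t => t.2 == u0)) /=.
rewrite [X in _ + X]big_seq_cond [X in _ + X]big1 ?addr0; last first.
  move=> t /andP[ts ne]; apply/eqP; rewrite mulf_eq0; apply/orP; right.
  apply: contraR ne => /(normal_wentry_unique (ns t ts) (ns t0 t0s) (min_t0 t ts)).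
  by move=> ->.
rewrite (eq_bigr (fun t => t.1 * wentry u0 (d_occ u0) (x_occ u0))) -?mulr_suml.
  by move/eqP; rewrite mulf_eq0 (negPf (normal_wentry_self (ns t0 t0s))) orbF => /eqP.
by move=> t /eqP ->.
Qed.

End CharacteristicZero.
End Fock.

Section FockAction.
Variables (k : fieldType) (A : algType k) (x d : 'I_N -> A) (f : A -> lend k 'I_N).
Hypotheses (fhom : is_alg_hom f) (char0 : [pchar k] =i pred0).
Hypotheses (fx : forall i, f (x i) = fock_x k i) (fd : forall i, f (d i) = fock_d k i).
Local Notation word := (cw_word x d).

Lemma alg_hom_word w : f (word w) = cw_word (fock_x k) (fock_d k) w.
Proof.
case: fhom => _ fM f1; elim: w => [|l w IH].
  by rewrite word_nil f1 /cw_word big_nil.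
rewrite word_cons fM IH /cw_word big_cons.
by case: l => [[] i]; rewrite /cw_letter /= ?fx ?fd.
Qed.

Lemma alg_hom_spanned_entry (s : seq (k * seq letter)) (G : seq letter -> seq letter) g h :
  f (\sum_(t <- s) t.1 *: word (G t.2)) (dirac k g) h =
  \sum_(t <- s) t.1 * wentry k (G t.2) g h.
Proof.
case: fhom => f_lin _ _; rewrite (linear_fun_sum f_lin s (word \o G)).
elim: s => [|t s IH]; first by rewrite !big_nil.
rewrite !big_cons lend_addE lend_scaleE IH /= alg_hom_word fock_word_dirac.
by rewrite /wentry /dirac eq_sym.
Qed.

Section Faithfulness.
Hypothesis hrel : cw_relations p q sgn x d.

Lemma normal_words_free (s : seq (k * seq letter)) :
  (forall t, t \in s -> normal_word t.2) ->
  (forall g h, \sum_(t <- s) t.1 * wentry k t.2 g h = 0) ->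
  \sum_(t <- s) t.1 *: word t.2 = 0.
Proof.
have [n] := ubnP (size s); elim: n s => // n IHn s size_s ns s0.
have [->|[t1 t1s]] : s = [::] \/ exists t1, t1 \in s.
  by case: s {size_s ns s0} => [|t1 s']; [left | right; exists t1; exact: mem_head].
  by rewrite big_nil.
have [t0 t0s min_t0] := seq_argmin (fun t : k * seq letter => d_length t.2) t1s.
have c0 := normal_min_coef_eq0 char0 ns s0 t0s min_t0.
rewrite (bigID (fun t => t.2 == t0.2)) /= (eq_bigr (fun t => t.1 *: word t0.2)).
  rewrite -scaler_suml c0 scale0r add0r -big_filter; apply: IHn.
  - rewrite size_filter -ltnS; apply: leq_trans size_s.
    rewrite -(count_predC (fun t : k * seq letter => t.2 != t0.2)) -addn1 leq_add2l.
    by rewrite -has_count; apply/hasP; exists t0 => //=; rewrite negbK.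
  - by move=> t; rewrite mem_filter => /andP[_ /ns].
  - move=> g h; rewrite big_filter; have := s0 g h.
    rewrite (bigID (fun t => t.2 == t0.2)) /=.
    rewrite (eq_bigr (fun t => t.1 * wentry k t0.2 g h)) -?mulr_suml ?c0 ?mul0r ?add0r //.
    by move=> t /eqP ->.
by move=> t /eqP ->.
Qed.

Lemma fock_faithful a : spanned x d (fun=> True) a ->
  (forall g h, f a (dirac k g) h = 0) -> a = 0.
Proof.
move=> span_a a0; have two_neq0 : 2%:R != 0 :> k by move/pcharf0P: char0 => ->.
have [s [Ea ns]] : spanned x d normal_word a.
  case: span_a => s0 [-> _]; apply: spanned_sum => t _.
  exact: word_normal_spanned.
rewrite Ea; apply: normal_words_free ns _ => g h.
by have := a0 g h; rewrite Ea (alg_hom_spanned_entry s id).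
Qed.

End Faithfulness.

Section Star.
Variable st : A -> A.
Hypothesis hst : cw_star x d st.

Lemma star_word w : st (word w) = word (word_star w).
Proof.
case: hst => _ stM stK stx std; have st1 : st 1 = 1.
  by rewrite -[st 1]mulr1 -{2}(stK 1) -stM mulr1 stK.
elim: w => [|l w IH]; first by rewrite word_nil st1.
rewrite word_cons stM IH /word_star /= rev_cons -cats1 word_cat /cw_word big_seq1.
by case: l => [[] i]; rewrite /cw_letter /= ?stx ?std.
Qed.

Lemma star_mul_eq0_entry (e : 'I_N -> int) a : cw_homogeneous x d e a ->
  st a * a = 0 -> forall g h, f a (dirac k g) h = 0.
Proof.
case: fhom hst => f_lin fM _ [st_lin _ _ _ _] [s [Ea deg_s]] aa0 g h.
set g' := occ_shift g e; pose c := \sum_(t <- s) t.1 * wentry k t.2 g g'.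
have entry_a m : f a (dirac k g) m = c * (g' == m)%:R.
  by rewrite Ea (alg_hom_spanned_entry s id) (homogeneous_entry _ _ deg_s).
suff c0 : c = 0 by rewrite entry_a c0 mul0r.
have entry_sa : f (st a) (dirac k g') g * fock_weight k g = c * fock_weight k g'.
  rewrite Ea (linear_fun_sum st_lin s word).
  rewrite (eq_bigr (fun t => t.1 *: word (word_star t.2))); last first.
    by move=> t _; rewrite star_word.
  rewrite (alg_hom_spanned_entry s word_star) !mulr_suml; apply: eq_bigr => t _.
  by rewrite -[LHS]mulrA -[RHS]mulrA (wentry_adjoint _ t.2 g g').
have : f (st a * a) (dirac k g) g = 0 by rewrite aa0 (linear_fun0 f_lin).
rewrite fM lend_mulE; have -> : f a (dirac k g) = fun m => c * dirac k g' m.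
  by apply/funext => m; rewrite entry_a /dirac eq_sym.
rewrite lendZ => /(congr1 (fun z => z * fock_weight k g)).
rewrite mul0r -mulrA entry_sa mulrA => /eqP.
by rewrite mulf_eq0 (negPf (fock_weight_neq0 char0 _)) orbF mulf_eq0 orbb => /eqP.
Qed.

End Star.

End FockAction.
End CliffordWeyl.

Unset Implicit Arguments.

Theorem mainTheorem2 (k : closedFieldType) (char0 : [pchar k] =i pred0)
  (p q : nat) (sgn : bool) (A : algType k) (x d : 'I_(p + q) -> A)
  (hA : cw_presented p q sgn A x d)
  (st : A -> A) (hst : cw_star x d st)
  (g : 'I_(p + q) -> int) (a : A) (ha : cw_homogeneous x d g a) :
  st a * a = 0 -> a = 0.
Proof.
move=> aa0; case: hA => hrel /(_ _ _ _ (fock_relations p q sgn k)).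
case=> -[f [fhom fx fd]] _.
apply: (fock_faithful fhom char0 fx fd hrel).
  by case: ha => s [Ea _]; exists s.
exact: (star_mul_eq0_entry fhom char0 fx fd hst ha aa0).
Qed.
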